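(* Let $\beta_1>\beta_0>0$, $n\ge2$ and $\varepsilon>0$. Then there exist $C,\alpha>0$ such that for all $t\ge0$ each of the probabilities $\mathbb{P}_{\mathbf 0}(\tilde X^n_t(n)\ge(n\beta_0+\varepsilon)t)$, $\mathbb{P}_{\mathbf 0}\big(\tilde X^n_t(n)\ge(\frac{(n-1)\beta_1+\beta_0}{n}+\varepsilon)t\big)$ and $\mathbb{P}_{\mathbf 0}(\tilde X^n_t(n)\ge(4\sqrt2\sqrt{\beta_1\beta_0}+\varepsilon)t)$ is at most $Ce^{-\alpha t}$. In particular $\tilde d_n(\beta_1)\le\min\big(n\beta_0,\frac{(n-1)\beta_1+\beta_0}{n},4\sqrt2\sqrt{\beta_1\beta_0}\big)$.
   Context: For $m\ge1$: for $x\in\mathbb{N}^m$, with zero boundary convention $x(0)=x(m+1)=0$, let $V_j(x)=\mathbf 1_{\{x(j-1)>x(j)\}}+\mathbf 1_{\{x(j+1)>x(j)\}}\in\{0,1,2\}$. $\tilde X^m$ denotes the continuous-time Markov chain on $\mathbb{N}^m$ jumping from $x$ to $x+e_j$ at rate $\tilde\beta_{V_j(x)}$ where $(\tilde\beta_0,\tilde\beta_1,\tilde\beta_2)=(\beta_0,\beta_1,\beta_1)$, with no other transitions; $\mathbb{P}_{\mathbf 0}$ is its law from the zero configuration. $\tilde d_m(\beta_1)=\inf\{d>0:\ \exists C,\alpha>0,\ \forall t\ge0,\ \mathbb{P}_{\mathbf 0}(\tilde X^m_t(m)\ge dt)\le Ce^{-\alpha t}\}$. *)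

From Stdlib Require Import Reals Lra List Arith.
Import ListNotations.
Open Scope R_scope.

(* Configurations x in N^m are functions nat -> nat; only indices 1..m are
   meaningful.  [cget m x i] implements the zero boundary convention
   x(0) = x(m+1) = 0 (and ignores values outside 1..m). *)
Definition cget (m : nat) (x : nat -> nat) (i : nat) : nat :=
  if andb (Nat.leb 1 i) (Nat.leb i m) then x i else 0%nat.

Definition Vj (m : nat) (x : nat -> nat) (j : nat) : nat :=
  ((if Nat.ltb (cget m x j) (cget m x (j - 1)) then 1 else 0)
   + (if Nat.ltb (cget m x j) (cget m x (j + 1)) then 1 else 0))%nat.

Definition rate (b0 b1 : R) (m : nat) (x : nat -> nat) (j : nat) : R :=
  match Vj m x j with O => b0 | _ => b1 end.

Definition upd (x : nat -> nat) (j : nat) : nat -> nat :=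
  fun i => if Nat.eqb i j then S (x i) else x i.

Definition sites (m : nat) : list nat := seq 1 m.

Definition sumR (l : list nat) (f : nat -> R) : R := fold_right Rplus 0 (map f l).

(* Uniformization constant: an upper bound on the total jump rate. *)
Definition Lam (b0 b1 : R) (m : nat) : R := INR m * Rmax b0 b1.

(* Ek m b0 b1 a k x = probability that the uniformized (discrete-time) chain,
   started at x, has coordinate m >= a after k steps. *)
Fixpoint Ek (m : nat) (b0 b1 a : R) (k : nat) (x : nat -> nat) : R :=
  match k with
  | O => if Rle_dec a (INR (cget m x m)) then 1 else 0
  | S k' =>
      sumR (sites m) (fun j => rate b0 b1 m x j / Lam b0 b1 m * Ek m b0 b1 a k' (upd x j))
      + (1 - sumR (sites m) (fun j => rate b0 b1 m x j / Lam b0 b1 m)) * Ek m b0 b1 a k' x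
  end.

Definition zero_conf : nat -> nat := fun _ => 0%nat.

(* Law at time t of the continuous-time chain X~^m started from 0, via
   uniformization: P_0(X~^m_t(m) >= a) = sum_k e^{-Lam t} (Lam t)^k / k! * Ek k 0.
   [ProbGe m b0 b1 t a p] says that this probability equals p. *)
Definition ProbGe (m : nat) (b0 b1 t a p : R) : Prop :=
  infinite_sum
    (fun k => exp (- (Lam b0 b1 m * t)) * (Lam b0 b1 m * t) ^ k / INR (fact k)
              * Ek m b0 b1 a k zero_conf) p.

Definition ProbGe_le (m : nat) (b0 b1 t a bound : R) : Prop :=
  exists p, ProbGe m b0 b1 t a p /\ p <= bound.

(* All three speeds come from one Chernoff bound.  If Phi >= exp (th * x(n)) and the generator
   of the chain satisfies  G Phi <= c Phi,  then P_0(X_t(n) >= a) <= Phi 0 * exp (c t - th a):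
   the one-step operator of the uniformized chain (rate Lam) multiplies Phi by at most
   1 + c / Lam, and the Poisson(Lam t) average of these factors is exp (c t).  Hence a speed d
   is exponentially unlikely as soon as c < th * d, and each bound is a choice of Phi:
   - exp (th * max_j x(j)): only a site realizing the maximum can raise it, and that site has
     V_j = 0, so it jumps at rate b0 (speed n b0);
   - a weighted sum over k of exp (th / k * (x(n-k+1) + ... + x(n))): a block of the last k
     sites either contains a site jumping at rate b0, or lies strictly below site n - k, in
     which case its exponential moment is dominated by that of the block of size k + 1
     (speed ((n-1) b1 + b0) / n);
   - sum_j e^{x(j)} + mu * sum_i |e^{x(i+1)} - e^{x(i)}|: a fast jump goes towards a strictly
     higher neighbour, and the variation term loses what the first sum gains
     (speed 4 sqrt 2 sqrt (b1 b0)). *)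

From Stdlib Require Import Reals Lra Lia List Arith Classical.
Import ListNotations.
Open Scope R_scope.

Lemma sumR_cons a l f : sumR (a :: l) f = f a + sumR l f.
Proof. reflexivity. Qed.

Lemma sumR_app l1 l2 f : sumR (l1 ++ l2) f = sumR l1 f + sumR l2 f.
Proof.
  induction l1 as [|a l1 IH]; [unfold sumR; simpl; ring|].
  rewrite <- app_comm_cons, !sumR_cons, IH; ring.
Qed.

Lemma sumR_ext l f g : (forall j, In j l -> f j = g j) -> sumR l f = sumR l g.
Proof.
  induction l as [|a l IH]; intros H; [reflexivity|].
  rewrite !sumR_cons, H, IH; [reflexivity | | left; reflexivity].
  intros j Hj; apply H; right; exact Hj.
Qed.

Lemma sumR_plus l f g : sumR l (fun j => f j + g j) = sumR l f + sumR l g.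
Proof. induction l as [|a l IH]; [unfold sumR; simpl; ring|]. rewrite !sumR_cons, IH; ring. Qed.

Lemma sumR_minus l f g : sumR l (fun j => f j - g j) = sumR l f - sumR l g.
Proof. induction l as [|a l IH]; [unfold sumR; simpl; ring|]. rewrite !sumR_cons, IH; ring. Qed.

Lemma sumR_scal l f c : sumR l (fun j => c * f j) = c * sumR l f.
Proof. induction l as [|a l IH]; [unfold sumR; simpl; ring|]. rewrite !sumR_cons, IH; ring. Qed.

Lemma sumR_const l c : sumR l (fun _ => c) = INR (length l) * c.
Proof.
  induction l as [|a l IH]; [unfold sumR; simpl; ring|].
  rewrite sumR_cons, IH; cbn [length]; rewrite S_INR; ring.
Qed.

Lemma sumR_map l h f : sumR (map h l) f = sumR l (fun j => f (h j)).
Proof. induction l as [|a l IH]; [reflexivity|]. cbn [map]. rewrite !sumR_cons, IH; reflexivity. Qed.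

Lemma sumR_le l f g : (forall j, In j l -> f j <= g j) -> sumR l f <= sumR l g.
Proof.
  induction l as [|a l IH]; intros H; [apply Rle_refl|]. rewrite !sumR_cons.
  apply Rplus_le_compat; [apply H; left; reflexivity|].
  apply IH; intros j Hj; apply H; right; exact Hj.
Qed.

Lemma sumR_nonneg l f : (forall j, In j l -> 0 <= f j) -> 0 <= sumR l f.
Proof.
  intros H. rewrite <- (Rmult_0_r (INR (length l))), <- sumR_const. now apply sumR_le.
Qed.

Lemma sumR_le_const l f c : (forall j, In j l -> f j <= c) -> sumR l f <= INR (length l) * c.
Proof. intros H. rewrite <- sumR_const. now apply sumR_le. Qed.

Lemma sumR_term l f j : In j l -> (forall i, In i l -> 0 <= f i) -> f j <= sumR l f.
Proof.
  induction l as [|a l IH]; intros Hj Hf; [destruct Hj|]. rewrite sumR_cons.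
  assert (0 <= f a) by (apply Hf; simpl; auto).
  assert (0 <= sumR l f) by (apply sumR_nonneg; intros; apply Hf; simpl; auto).
  destruct Hj as [<-|Hj]; [lra|].
  assert (f j <= sumR l f) by (apply IH; auto; intros; apply Hf; simpl; auto). lra.
Qed.

Lemma sumR_indicator_out l j f :
  ~ In j l -> sumR l (fun i => if Nat.eqb i j then f i else 0) = 0.
Proof.
  induction l as [|a l IH]; intros Hj; [reflexivity|].
  rewrite sumR_cons, IH by (intro; apply Hj; right; assumption).
  destruct (Nat.eqb_spec a j) as [->|]; [exfalso; apply Hj; left|]; auto; ring.
Qed.

Lemma sumR_indicator l j f :
  NoDup l -> In j l -> sumR l (fun i => if Nat.eqb i j then f i else 0) = f j.
Proof.
  induction l as [|a l IH]; intros Hd Hj; [destruct Hj|].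
  inversion Hd as [|? ? Ha Hl]; subst. rewrite sumR_cons.
  destruct (Nat.eqb_spec a j) as [->|Haj].
  - rewrite sumR_indicator_out by assumption. ring.
  - destruct Hj as [|Hj]; [contradiction|]. rewrite IH by assumption. ring.
Qed.

Lemma sumR_exchange (l1 l2 : list nat) (f : nat -> nat -> R) :
  sumR l1 (fun i => sumR l2 (f i)) = sumR l2 (fun j => sumR l1 (fun i => f i j)).
Proof.
  induction l1 as [|a l1 IH].
  - transitivity 0; [reflexivity|].
    rewrite (sumR_ext _ _ (fun _ => 0)) by reflexivity. rewrite sumR_const; ring.
  - rewrite sumR_cons, IH, <- sumR_plus. apply sumR_ext; intros; reflexivity.
Qed.

(** * Configurations and the generator *)

Lemma exp_le_mono x y : x <= y -> exp x <= exp y.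
Proof. intros [H|H]; [left; apply exp_increasing; exact H | rewrite H; apply Rle_refl]. Qed.

Lemma one_le_exp u : 0 <= u -> 1 <= exp u.
Proof. intros. pose proof (exp_ineq1_le u). lra. Qed.

Lemma exp_sub1_le u : 0 <= u < 1 -> exp u - 1 <= u / (1 - u).
Proof.
  intros Hu. pose proof (exp_ineq1_le (- u)). pose proof (exp_pos u).
  assert (exp u * exp (- u) = 1) by (rewrite <- exp_plus, Rplus_opp_r; apply exp_0).
  apply Rmult_le_reg_r with (1 - u); [lra|].
  unfold Rdiv. rewrite Rmult_assoc, Rinv_l; nra.
Qed.

Lemma Rdiv_nonneg a b : 0 <= a -> 0 < b -> 0 <= a / b.
Proof. intros. unfold Rdiv. apply Rmult_le_pos; [|left; apply Rinv_0_lt_compat]; assumption. Qed.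

Lemma in_sites n j : In j (sites n) <-> (1 <= j <= n)%nat.
Proof. unfold sites. rewrite in_seq. lia. Qed.

Lemma length_sites n : length (sites n) = n.
Proof. apply length_seq. Qed.

Lemma sumR_sites_le n f c : (forall j, (1 <= j <= n)%nat -> f j <= c) ->
  sumR (sites n) f <= INR n * c.
Proof.
  intros H. rewrite <- (length_sites n) at 2. apply sumR_le_const.
  intros j Hj. apply H, in_sites, Hj.
Qed.

Lemma cget_in m x i : (1 <= i <= m)%nat -> cget m x i = x i.
Proof.
  intros [H1 H2]. unfold cget. apply Nat.leb_le in H1, H2. rewrite H1, H2. reflexivity.
Qed.

Lemma cget_out m x i : (i = 0 \/ m < i)%nat -> cget m x i = 0%nat.
Proof.
  intros H. unfold cget. destruct (Nat.leb_spec 1 i), (Nat.leb_spec i m); simpl; auto; lia.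
Qed.

Lemma cget_upd m x j i : (1 <= j <= m)%nat ->
  cget m (upd x j) i = if Nat.eqb i j then S (cget m x i) else cget m x i.
Proof.
  intros Hj. destruct (le_lt_dec 1 i); [destruct (le_lt_dec i m)|].
  - rewrite !cget_in by lia. reflexivity.
  - rewrite !cget_out by lia. destruct (Nat.eqb_spec i j); [lia | reflexivity].
  - rewrite !cget_out by lia. destruct (Nat.eqb_spec i j); [lia | reflexivity].
Qed.

Lemma rate_Vj0 b0 b1 m x j : Vj m x j = 0%nat -> rate b0 b1 m x j = b0.
Proof. unfold rate. intros ->. reflexivity. Qed.

Lemma rate_Vj_neq0 b0 b1 m x j : Vj m x j <> 0%nat -> rate b0 b1 m x j = b1.
Proof. unfold rate. destruct (Vj m x j); [contradiction | reflexivity]. Qed.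

Lemma rate_bounds b0 b1 m x j : 0 <= b0 <= b1 -> 0 <= rate b0 b1 m x j <= b1.
Proof. unfold rate. destruct (Vj m x j); lra. Qed.

Definition Gen (b0 b1 : R) (n : nat) (Phi : (nat -> nat) -> R) (x : nat -> nat) : R :=
  sumR (sites n) (fun j => rate b0 b1 n x j * (Phi (upd x j) - Phi x)).

Lemma Gen_sum b0 b1 n (l : list nat) (w : nat -> R) (F : nat -> (nat -> nat) -> R) x :
  Gen b0 b1 n (fun y => sumR l (fun k => w k * F k y)) x
  = sumR l (fun k => w k * Gen b0 b1 n (F k) x).
Proof.
  unfold Gen. rewrite (sumR_ext (sites n) _
    (fun j => sumR l (fun k => rate b0 b1 n x j * (w k * (F k (upd x j) - F k x))))).
  - rewrite sumR_exchange. apply sumR_ext. intros k _.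
    rewrite <- sumR_scal. apply sumR_ext. intros. ring.
  - intros j _. rewrite <- sumR_minus, <- sumR_scal. apply sumR_ext. intros. ring.
Qed.

(** * Chernoff bound through uniformization *)

Lemma poisson_sum_le (s K q : R) (e : nat -> R) :
  0 <= s -> (forall k, 0 <= e k <= K * q ^ k) ->
  exists p, infinite_sum (fun k => exp (- s) * s ^ k / INR (fact k) * e k) p
            /\ p <= K * exp (s * (q - 1)).
Proof.
  intros Hs He.
  set (B := fun k => / INR (fact k) * (s * q) ^ k * (K * exp (- s))).
  assert (HB : Un_cv (fun N => sum_f_R0 B N) (K * exp (- s) * exp (s * q))).
  { assert (Hl : Un_cv (sum_f_R0 (fun k => / INR (fact k) * (s * q) ^ k)) (exp (s * q))).
    { unfold exp. destruct (exist_exp (s * q)) as [l Hl]. exact Hl. }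
    eapply CV_mult with (An := fun _ => K * exp (- s)) in Hl;
      [| intros eps Heps; exists 0%nat; intros; unfold Rdist; rewrite Rminus_diag, Rabs_R0; lra].
    intros eps Heps. destruct (Hl eps Heps) as [N HN]. exists N. intros m Hm.
    unfold B. rewrite <- scal_sum. apply HN; exact Hm. }
  set (u := fun k => exp (- s) * s ^ k / INR (fact k) * e k).
  assert (Hw : forall k, 0 <= exp (- s) * s ^ k / INR (fact k)).
  { intros k. apply Rdiv_nonneg; [apply Rmult_le_pos; [left; apply exp_pos | apply pow_le; lra]|].
    apply lt_0_INR, lt_O_fact. }
  assert (HuB : forall k, 0 <= u k <= B k).
  { intros k. specialize (He k). unfold u, B. split; [apply Rmult_le_pos; [apply Hw|lra]|].
    eapply Rle_trans; [apply Rmult_le_compat_l; [apply Hw | apply He]|].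
    right. rewrite Rpow_mult_distr. unfold Rdiv. ring. }
  destruct (Rseries_CV_comp u B HuB (exist _ _ HB)) as [p Hp].
  exists p. split; [exact Hp|].
  eapply Rle_trans.
  - eapply Rle_cv_lim; [| exact Hp | exact HB]. intros N. apply sum_Rle. intros; apply HuB.
  - right. rewrite Rmult_assoc, <- exp_plus. f_equal. f_equal. ring.
Qed.

Definition speed_exp_tail (n : nat) (b0 b1 d : R) : Prop :=
  exists C alpha : R, 0 < C /\ 0 < alpha /\
    forall t, 0 <= t -> ProbGe_le n b0 b1 t (d * t) (C * exp (- (alpha * t))).

Section Uniformization.

Variables (b0 b1 : R) (n : nat).
Hypotheses (Hn : (1 <= n)%nat) (Hb0 : 0 < b0) (Hb01 : b0 <= b1).

Let L := Lam b0 b1 n.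

Lemma Lam_pos : 0 < L.
Proof.
  unfold L, Lam. rewrite Rmax_right by exact Hb01.
  apply Rmult_lt_0_compat; [apply lt_0_INR; lia | lra].
Qed.

Lemma sum_rates_le_Lam x : sumR (sites n) (rate b0 b1 n x) <= L.
Proof.
  unfold L, Lam. rewrite Rmax_right by exact Hb01.
  apply sumR_sites_le. intros j _. apply rate_bounds. lra.
Qed.

Definition step (F : (nat -> nat) -> R) (x : nat -> nat) : R :=
  sumR (sites n) (fun j => rate b0 b1 n x j / L * F (upd x j))
  + (1 - sumR (sites n) (fun j => rate b0 b1 n x j / L)) * F x.

Lemma Ek_S a k x : Ek n b0 b1 a (S k) x = step (Ek n b0 b1 a k) x.
Proof. reflexivity. Qed.

Lemma step_Gen F x : step F x = F x + Gen b0 b1 n F x / L.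
Proof.
  unfold step, Gen. set (r := rate b0 b1 n x).
  rewrite (sumR_ext _ (fun j => r j / L * F (upd x j)) (fun j => / L * (r j * F (upd x j))))
    by (intros; unfold Rdiv; ring).
  rewrite (sumR_ext _ (fun j => r j / L) (fun j => / L * r j)) by (intros; unfold Rdiv; ring).
  rewrite (sumR_ext _ (fun j => r j * (F (upd x j) - F x)) (fun j => r j * F (upd x j) - F x * r j))
    by (intros; ring).
  rewrite !sumR_scal, sumR_minus, sumR_scal. unfold Rdiv. ring.
Qed.

Lemma move_weight_nonneg x j : 0 <= rate b0 b1 n x j / L.
Proof. apply Rdiv_nonneg; [apply rate_bounds; lra | apply Lam_pos]. Qed.

Lemma stay_weight_nonneg x : 0 <= 1 - sumR (sites n) (fun j => rate b0 b1 n x j / L).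
Proof.
  pose proof Lam_pos. pose proof (sum_rates_le_Lam x).
  rewrite (sumR_ext _ _ (fun j => / L * rate b0 b1 n x j)) by (intros; unfold Rdiv; ring).
  rewrite sumR_scal. apply Rmult_le_compat_l with (r := / L) in H0;
    [|left; apply Rinv_0_lt_compat; lra].
  rewrite Rinv_l in H0; lra.
Qed.

Lemma step_le F G x : (forall y, F y <= G y) -> step F x <= step G x.
Proof.
  intros HFG. unfold step. apply Rplus_le_compat.
  - apply sumR_le. intros. apply Rmult_le_compat_l; [apply move_weight_nonneg | apply HFG].
  - apply Rmult_le_compat_l; [apply stay_weight_nonneg | apply HFG].
Qed.

Lemma step_nonneg F x : (forall y, 0 <= F y) -> 0 <= step F x.
Proof.
  intros HF. unfold step. apply Rplus_le_le_0_compat.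
  - apply sumR_nonneg. intros. apply Rmult_le_pos; [apply move_weight_nonneg | apply HF].
  - apply Rmult_le_pos; [apply stay_weight_nonneg | apply HF].
Qed.

Lemma step_scal Q F x : step (fun y => Q * F y) x = Q * step F x.
Proof.
  unfold step.
  rewrite (sumR_ext _ (fun j => rate b0 b1 n x j / L * (Q * F (upd x j)))
             (fun j => Q * (rate b0 b1 n x j / L * F (upd x j)))) by (intros; ring).
  rewrite sumR_scal. ring.
Qed.

Section Drift.

Variables (Phi : (nat -> nat) -> R) (th c : R).
Hypotheses (Hth : 0 <= th) (Hc : 0 <= c)
  (HPhi : forall x, exp (th * INR (x n)) <= Phi x)
  (Hdrift : forall x, Gen b0 b1 n Phi x <= c * Phi x).

Lemma step_Phi_le x : step Phi x <= (1 + c / L) * Phi x.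
Proof.
  pose proof Lam_pos. rewrite step_Gen.
  assert (Gen b0 b1 n Phi x / L <= c * Phi x / L)
    by (apply Rmult_le_compat_r; [left; apply Rinv_0_lt_compat; lra | apply Hdrift]).
  unfold Rdiv in *. lra.
Qed.

Lemma Ek_le_drift a k x :
  0 <= Ek n b0 b1 a k x <= (1 + c / L) ^ k * exp (- (th * a)) * Phi x.
Proof.
  pose proof Lam_pos.
  assert (Hq : 0 <= 1 + c / L) by (pose proof (Rdiv_nonneg c L Hc H); lra).
  revert x. induction k as [|k IH]; intros x.
  - simpl. rewrite Rmult_1_l. pose proof (exp_pos (- (th * a))).
    pose proof (exp_pos (th * INR (x n))) as Hpos. pose proof (HPhi x).
    destruct (Rle_dec a (INR (cget n x n))) as [Ha|]; [|split; nra].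
    rewrite cget_in in Ha by lia.
    assert (exp (th * a) <= exp (th * INR (x n))) by (apply exp_le_mono, Rmult_le_compat_l; lra).
    assert (exp (- (th * a)) * exp (th * a) = 1)
      by (rewrite <- exp_plus, Rplus_opp_l; apply exp_0).
    split; nra.
  - rewrite Ek_S. split; [apply step_nonneg; intros; apply IH|].
    set (Q := (1 + c / L) ^ k * exp (- (th * a))).
    assert (0 <= Q) by (apply Rmult_le_pos; [apply pow_le | left; apply exp_pos]; lra).
    eapply Rle_trans; [apply step_le with (G := fun y => Q * Phi y); apply IH|].
    rewrite step_scal. apply Rle_trans with (Q * ((1 + c / L) * Phi x)).
    + apply Rmult_le_compat_l; [assumption | apply step_Phi_le].
    + right. unfold Q. simpl pow. ring.
Qed.

Lemma ProbGe_le_drift t a :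
  0 <= t -> ProbGe_le n b0 b1 t a (Phi zero_conf * exp (c * t - th * a)).
Proof.
  intros Ht. pose proof Lam_pos.
  destruct (poisson_sum_le (L * t) (exp (- (th * a)) * Phi zero_conf) (1 + c / L)
              (fun k => Ek n b0 b1 a k zero_conf)) as [p [Hp Hle]].
  - apply Rmult_le_pos; lra.
  - intros k. replace (exp (- (th * a)) * Phi zero_conf * (1 + c / L) ^ k)
      with ((1 + c / L) ^ k * exp (- (th * a)) * Phi zero_conf) by ring.
    apply Ek_le_drift.
  - exists p. split; [exact Hp|]. eapply Rle_trans; [exact Hle|].
    right. rewrite (Rmult_comm (exp _)), Rmult_assoc, <- exp_plus. f_equal. f_equal.
    field. lra.
Qed.

End Drift.

Lemma speed_exp_tail_drift (Phi : (nat -> nat) -> R) th c d :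
  0 <= th -> 0 <= c -> c < th * d ->
  (forall x, exp (th * INR (x n)) <= Phi x) ->
  (forall x, Gen b0 b1 n Phi x <= c * Phi x) ->
  speed_exp_tail n b0 b1 d.
Proof.
  intros Hth Hc Hcd HPhi Hdrift. exists (Phi zero_conf), (th * d - c).
  split; [|split; [lra|]].
  - eapply Rlt_le_trans; [apply exp_pos | apply (HPhi zero_conf)].
  - intros t Ht. replace (- ((th * d - c) * t)) with (c * t - th * (d * t)) by ring.
    now apply ProbGe_le_drift.
Qed.
End Uniformization.

(** * Speed n b0: the maximal coordinate *)

Definition max_on (x : nat -> nat) (l : list nat) : nat := list_max (map x l).

Lemma le_max_on x l j : In j l -> (x j <= max_on x l)%nat.
Proof.
  induction l as [|a l IH]; intros Hj; [destruct Hj|]. unfold max_on, list_max in *. cbn.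
  destruct Hj as [<-|Hj]; [lia|]. specialize (IH Hj). lia.
Qed.

Lemma max_on_upd x l j : (max_on (upd x j) l <= Nat.max (max_on x l) (S (x j)))%nat.
Proof.
  induction l as [|i l IH]; unfold max_on, list_max in *; cbn; [lia|]. unfold upd at 1.
  destruct (Nat.eqb_spec i j) as [->|]; lia.
Qed.

Lemma max_on_attained x l : l <> [] -> exists j, In j l /\ x j = max_on x l.
Proof.
  induction l as [|i l IH]; intros Hl; [contradiction Hl; reflexivity|].
  unfold max_on, list_max in *. cbn.
  destruct l as [|i' l'].
  - exists i. cbn. split; [left|]; lia.
  - destruct IH as [j [Hj Ej]]; [discriminate|].
    destruct (Nat.le_ge_cases (x i) (fold_right Nat.max 0%nat (map x (i' :: l')))).
    + exists j. split; [right; exact Hj | lia].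
    + exists i. split; [left; reflexivity | lia].
Qed.

Lemma cget_le_max_on m x i : (cget m x i <= max_on x (sites m))%nat.
Proof.
  unfold cget. destruct (Nat.leb_spec 1 i), (Nat.leb_spec i m); simpl; try lia.
  apply le_max_on, in_sites. lia.
Qed.

Lemma Vj_at_max m x j : (1 <= j <= m)%nat -> (max_on x (sites m) <= x j)%nat -> Vj m x j = 0%nat.
Proof.
  intros Hj Hmax. unfold Vj. rewrite (cget_in m x j) by exact Hj.
  pose proof (cget_le_max_on m x (j - 1)). pose proof (cget_le_max_on m x (j + 1)).
  destruct (Nat.ltb_spec (x j) (cget m x (j - 1))); [lia|].
  destruct (Nat.ltb_spec (x j) (cget m x (j + 1))); [lia|]. reflexivity.
Qed.

Section MaxCoordinate.

Variables (b0 b1 : R) (n : nat) (th : R).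
Hypotheses (Hb0 : 0 <= b0) (Hb01 : b0 <= b1) (Hth : 0 <= th).

Definition exp_max (x : nat -> nat) : R := exp (th * INR (max_on x (sites n))).

(* Only a site realizing the maximum can raise it, and such a site jumps at rate b0. *)
Lemma Gen_exp_max_le x : Gen b0 b1 n exp_max x <= INR n * b0 * (exp th - 1) * exp_max x.
Proof.
  unfold Gen. rewrite !Rmult_assoc. apply sumR_sites_le. intros j Hj.
  pose proof (one_le_exp th Hth). pose proof (exp_pos (th * INR (max_on x (sites n)))) as Hpos.
  fold (exp_max x) in Hpos. pose proof (le_max_on x (sites n) j (proj2 (in_sites n j) Hj)).
  pose proof (rate_bounds b0 b1 n x j ltac:(lra)).
  destruct (Nat.lt_ge_cases (x j) (max_on x (sites n))) as [Hlt|Hge].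
  - assert (exp_max (upd x j) <= exp_max x).
    { apply exp_le_mono, Rmult_le_compat_l; [lra|]. apply le_INR.
      pose proof (max_on_upd x (sites n) j). lia. }
    assert (0 <= b0 * (exp th - 1) * exp_max x) by (apply Rmult_le_pos; [apply Rmult_le_pos|]; lra).
    nra.
  - rewrite rate_Vj0 by (apply Vj_at_max; lia).
    assert (exp_max (upd x j) <= exp th * exp_max x).
    { unfold exp_max. rewrite <- exp_plus. apply exp_le_mono.
      assert (INR (max_on (upd x j) (sites n)) <= 1 + INR (max_on x (sites n))).
      { rewrite Rplus_comm, <- S_INR. apply le_INR. pose proof (max_on_upd x (sites n) j). lia. }
      nra. }
    nra.
Qed.

End MaxCoordinate.

Lemma speed_exp_tail_max b0 b1 n eps : 0 < b0 -> b0 <= b1 -> (1 <= n)%nat -> 0 < eps ->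
  speed_exp_tail n b0 b1 (INR n * b0 + eps).
Proof.
  intros Hb0 Hb01 Hn He. assert (HnR : 1 <= INR n) by (apply (le_INR 1); lia).
  set (v := INR n * b0). assert (Hv : 0 < v) by (unfold v; nra).
  set (th := eps / (2 * v + eps)).
  assert (Hth : 0 < th < 1).
  { unfold th. split; [apply Rdiv_lt_0_compat; lra|].
    apply Rmult_lt_reg_r with (2 * v + eps); [lra|]. unfold Rdiv. rewrite Rmult_assoc, Rinv_l; lra. }
  assert (Hc : v * (exp th - 1) <= th * (v + eps / 2)).
  { pose proof (exp_sub1_le th ltac:(lra)).
    replace (th / (1 - th)) with (eps / (2 * v)) in H by (unfold th; field; lra).
    replace (th * (v + eps / 2)) with (eps / 2) by (unfold th; field; lra).
    apply Rmult_le_compat_l with (r := v) in H; [|lra].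
    replace (v * (eps / (2 * v))) with (eps / 2) in H by (field; lra). exact H. }
  apply (speed_exp_tail_drift b0 b1 n Hn Hb0 Hb01 (exp_max n th) th (v * (exp th - 1))).
  - lra.
  - pose proof (one_le_exp th ltac:(lra)). apply Rmult_le_pos; lra.
  - nra.
  - intros x. apply exp_le_mono, Rmult_le_compat_l; [lra|]. apply le_INR, le_max_on, in_sites. lia.
  - intros x. unfold v. apply Gen_exp_max_le; lia || lra.
Qed.

(** * Speed 4 sqrt 2 sqrt (b1 b0): the exponential variation *)

Section Variation.

Variable n : nat.

Definition ecoord (x : nat -> nat) (i : nat) : R := exp (INR (cget n x i)).
Definition esum (x : nat -> nat) : R := sumR (sites n) (ecoord x).
(* Includes the two boundary edges, where [cget] gives the value e^0 = 1. *)
Definition evar (x : nat -> nat) : R :=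
  sumR (seq 0 (S n)) (fun i => Rabs (ecoord x (S i) - ecoord x i)).

Definition ecoord_gain (x : nat -> nat) (j : nat) : R := (exp 1 - 1) * ecoord x j.

Lemma ecoord_gain_nonneg x j : 0 <= ecoord_gain x j.
Proof.
  unfold ecoord_gain, ecoord.
  pose proof (one_le_exp 1 ltac:(lra)). pose proof (exp_pos (INR (cget n x j))).
  nra.
Qed.

Lemma ecoord_upd x j i : (1 <= j <= n)%nat ->
  ecoord (upd x j) i = if Nat.eqb i j then exp 1 * ecoord x i else ecoord x i.
Proof.
  intros Hj. unfold ecoord. rewrite cget_upd by exact Hj.
  destruct (Nat.eqb i j); [rewrite S_INR, exp_plus; ring | reflexivity].
Qed.

Lemma esum_upd x j : (1 <= j <= n)%nat -> esum (upd x j) - esum x = ecoord_gain x j.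
Proof.
  intros Hj. unfold esum. rewrite <- sumR_minus.
  rewrite (sumR_ext _ _ (fun i => if Nat.eqb i j then ecoord_gain x i else 0)).
  - apply sumR_indicator; [apply seq_NoDup | apply in_sites, Hj].
  - intros i _. rewrite ecoord_upd by exact Hj. unfold ecoord_gain. destruct (Nat.eqb i j); ring.
Qed.

Lemma ecoord_le x i k : (cget n x i <= cget n x k)%nat -> ecoord x i <= ecoord x k.
Proof. intros. apply exp_le_mono, le_INR. assumption. Qed.

Lemma ecoord_lt x i k : (cget n x i < cget n x k)%nat -> exp 1 * ecoord x i <= ecoord x k.
Proof.
  intros. unfold ecoord. rewrite <- exp_plus. apply exp_le_mono.
  rewrite Rplus_comm, <- S_INR. apply le_INR. assumption.
Qed.

Definition edge_change (x : nat -> nat) (j k : nat) : R :=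
  if Nat.ltb (cget n x j) (cget n x k) then - ecoord_gain x j else ecoord_gain x j.

Lemma edge_change_eq x j k :
  Rabs (ecoord x k - exp 1 * ecoord x j) - Rabs (ecoord x k - ecoord x j) = edge_change x j k.
Proof.
  unfold edge_change, ecoord_gain. pose proof (exp_pos (INR (cget n x j))). fold (ecoord x j) in H.
  pose proof (one_le_exp 1 ltac:(lra)).
  destruct (Nat.ltb_spec (cget n x j) (cget n x k)) as [Hlt|Hge].
  - pose proof (ecoord_lt x j k Hlt). rewrite !Rabs_pos_eq by nra. ring.
  - pose proof (ecoord_le x k j Hge).
    rewrite (Rabs_left1 (ecoord x k - exp 1 * ecoord x j)) by nra.
    rewrite (Rabs_left1 (ecoord x k - ecoord x j)) by lra. ring.
Qed.

Lemma evar_upd x j : (1 <= j <= n)%nat ->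
  evar (upd x j) - evar x = edge_change x j (j - 1) + edge_change x j (j + 1).
Proof.
  intros Hj. unfold evar. rewrite <- sumR_minus.
  set (f := fun i : nat => if Nat.eqb i (j - 1) then edge_change x j (j - 1) else 0).
  set (g := fun i : nat => if Nat.eqb i j then edge_change x j (j + 1) else 0).
  rewrite (sumR_ext _ _ (fun i => f i + g i)).
  - rewrite sumR_plus. unfold f, g.
    rewrite (sumR_indicator _ _ (fun _ => edge_change x j (j - 1))),
            (sumR_indicator _ _ (fun _ => edge_change x j (j + 1)));
      try apply seq_NoDup; try (apply in_seq; lia). reflexivity.
  - intros i _. unfold f, g. rewrite <- !edge_change_eq, !ecoord_upd by exact Hj.
    destruct (Nat.eqb_spec i (j - 1)) as [->|Hi1].
    + replace (S (j - 1)) with j by lia. rewrite Nat.eqb_refl.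
      destruct (Nat.eqb_spec (j - 1) j); [lia|].
      rewrite (Rabs_minus_sym (ecoord x (j - 1))), (Rabs_minus_sym (ecoord x (j - 1)) (ecoord x j)).
      ring.
    + destruct (Nat.eqb_spec i j) as [->|Hi2].
      * destruct (Nat.eqb_spec (S j) j); [lia|]. replace (j + 1)%nat with (S j) by lia. ring.
      * destruct (Nat.eqb_spec (S i) j); [lia|]. ring.
Qed.

Definition edge_down x i : R :=
  if Nat.ltb (cget n x (S i)) (cget n x i) then Rabs (ecoord x (S i) - ecoord x i) else 0.
Definition edge_up x i : R :=
  if Nat.ltb (cget n x i) (cget n x (S i)) then Rabs (ecoord x (S i) - ecoord x i) else 0.

Lemma edge_down_nonneg x i : 0 <= edge_down x i.
Proof. unfold edge_down. destruct (Nat.ltb _ _); [apply Rabs_pos | lra]. Qed.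

Lemma edge_up_nonneg x i : 0 <= edge_up x i.
Proof. unfold edge_up. destruct (Nat.ltb _ _); [apply Rabs_pos | lra]. Qed.

Lemma edge_down_up_le x i : edge_down x i + edge_up x i <= Rabs (ecoord x (S i) - ecoord x i).
Proof.
  unfold edge_down, edge_up. pose proof (Rabs_pos (ecoord x (S i) - ecoord x i)).
  destruct (Nat.ltb_spec (cget n x (S i)) (cget n x i)),
           (Nat.ltb_spec (cget n x i) (cget n x (S i))); lra || lia.
Qed.

Section Drift.

Variables (b0 b1 mu : R).
Hypotheses (Hb0 : 0 <= b0) (Hb01 : b0 <= b1) (Hmu : 0 <= mu).

Definition esum_evar (x : nat -> nat) : R := esum x + mu * evar x.

(* A site with V_j = 0 jumps at the slow rate; otherwise the raise is paid for by the climb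
   towards a strictly higher neighbour, which the variation loses. *)
Lemma Gen_esum_evar_site x j : (1 <= j <= n)%nat ->
  rate b0 b1 n x j * (esum_evar (upd x j) - esum_evar x)
  <= b0 * (1 + 2 * mu) * ecoord_gain x j + b1 * (edge_down x (j - 1) + edge_up x j).
Proof.
  intros Hj. unfold esum_evar.
  replace (esum (upd x j) + mu * evar (upd x j) - (esum x + mu * evar x))
    with (esum (upd x j) - esum x + mu * (evar (upd x j) - evar x)) by ring.
  rewrite esum_upd, evar_upd by exact Hj.
  pose proof (ecoord_gain_nonneg x j).
  pose proof (edge_down_nonneg x (j - 1)). pose proof (edge_up_nonneg x j).
  unfold edge_change. destruct (Nat.eq_dec (Vj n x j) 0) as [HV|HV].
  - rewrite rate_Vj0 by exact HV. unfold Vj in HV.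
    destruct (Nat.ltb (cget n x j) (cget n x (j - 1))), (Nat.ltb (cget n x j) (cget n x (j + 1)));
      try discriminate HV.
    assert (0 <= b1 * (edge_down x (j - 1) + edge_up x j)) by (apply Rmult_le_pos; lra). nra.
  - rewrite rate_Vj_neq0 by exact HV. unfold Vj in HV.
    assert (Hclimb : ecoord_gain x j <= edge_down x (j - 1) + edge_up x j).
    { pose proof (one_le_exp 1 ltac:(lra)). pose proof (exp_pos (INR (cget n x j))) as Hej.
      fold (ecoord x j) in Hej. unfold edge_down, edge_up, ecoord_gain.
      replace (S (j - 1)) with j by lia. replace (j + 1)%nat with (S j) in HV by lia.
      destruct (Nat.ltb_spec (cget n x j) (cget n x (j - 1))) as [Hl|];
        destruct (Nat.ltb_spec (cget n x j) (cget n x (S j))) as [Hr|]; try (simpl in HV; lia).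
      - pose proof (ecoord_lt x j (j - 1) Hl). pose proof (Rabs_pos (ecoord x (S j) - ecoord x j)).
        rewrite (Rabs_left1 (ecoord x j - ecoord x (j - 1))) by nra. lra.
      - pose proof (ecoord_lt x j (j - 1) Hl). rewrite Rabs_left1 by nra. lra.
      - pose proof (ecoord_lt x j (S j) Hr). rewrite Rabs_pos_eq by nra. lra. }
    assert (b1 * ecoord_gain x j <= b1 * (edge_down x (j - 1) + edge_up x j))
      by (apply Rmult_le_compat_l; lra).
    assert (0 <= b0 * (1 + 2 * mu) * ecoord_gain x j)
      by (apply Rmult_le_pos; [apply Rmult_le_pos|]; lra).
    assert (0 <= b1 * (mu * ecoord_gain x j)) by (apply Rmult_le_pos; [|apply Rmult_le_pos]; lra).
    destruct (Nat.ltb (cget n x j) (cget n x (j - 1))), (Nat.ltb (cget n x j) (cget n x (j + 1)));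
      try (simpl in HV; lia); nra.
Qed.

Lemma Gen_esum_evar_le x :
  Gen b0 b1 n esum_evar x <= b0 * (1 + 2 * mu) * (exp 1 - 1) * esum x + b1 * evar x.
Proof.
  unfold Gen. eapply Rle_trans.
  { apply sumR_le. intros j Hj. apply Gen_esum_evar_site, in_sites, Hj. }
  rewrite sumR_plus, !sumR_scal, sumR_plus. unfold ecoord_gain. rewrite sumR_scal.
  fold (esum x). replace (b0 * (1 + 2 * mu) * (exp 1 - 1) * esum x)
    with (b0 * (1 + 2 * mu) * ((exp 1 - 1) * esum x)) by ring.
  apply Rplus_le_compat_l, Rmult_le_compat_l; [lra|].
  assert (Hdown : sumR (sites n) (fun j => edge_down x (j - 1)) <= sumR (seq 0 (S n)) (edge_down x)).
  { unfold sites. rewrite <- seq_shift, sumR_map.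
    rewrite (sumR_ext _ _ (edge_down x)) by (intros; f_equal; lia).
    replace (S n) with (n + 1)%nat by lia. rewrite seq_app, sumR_app.
    pose proof (sumR_nonneg (seq (0 + n) 1) (edge_down x) (fun i _ => edge_down_nonneg x i)). lra. }
  assert (Hup : sumR (sites n) (edge_up x) <= sumR (seq 0 (S n)) (edge_up x)).
  { unfold sites. simpl seq. rewrite sumR_cons. pose proof (edge_up_nonneg x 0). lra. }
  assert (sumR (seq 0 (S n)) (edge_down x) + sumR (seq 0 (S n)) (edge_up x) <= evar x).
  { unfold evar. rewrite <- sumR_plus. apply sumR_le. intros. apply edge_down_up_le. }
  lra.
Qed.

End Drift.
End Variation.

(* With e - 1 <= 2 and b0 <= sqrt (b1 b0), the left side is at most
   (2 + 1 / sqrt 2) sqrt (b1 b0). *)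
Lemma slow_rate_coefficient_le b0 b1 :
  0 < b0 -> b0 <= b1 ->
  b0 * (1 + 2 * (b1 / (4 * sqrt 2 * sqrt (b1 * b0)))) * (exp 1 - 1)
  <= 4 * sqrt 2 * sqrt (b1 * b0).
Proof.
  intros Hb0 Hb01. set (s := sqrt (b1 * b0)). set (lam := 4 * sqrt 2 * s).
  assert (Hs2 : s * s = b1 * b0) by (apply sqrt_sqrt; nra).
  assert (Hs0 : 0 < s) by (apply sqrt_lt_R0; nra).
  assert (Hb0s : b0 <= s) by (destruct (Rle_lt_dec b0 s); nra).
  assert (Hr2 : sqrt 2 * sqrt 2 = 2) by (apply sqrt_sqrt; lra).
  assert (Hr0 : 0 < sqrt 2) by (apply sqrt_lt_R0; lra).
  assert (Hlam : 0 < lam) by (unfold lam; nra).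
  pose proof exp_le_3. pose proof (one_le_exp 1 ltac:(lra)).
  replace (b0 * (1 + 2 * (b1 / lam)) * (exp 1 - 1))
    with ((b0 * lam + 2 * (b1 * b0)) * (exp 1 - 1) / lam) by (field; lra).
  apply Rmult_le_reg_r with lam; [exact Hlam|].
  unfold Rdiv. rewrite Rmult_assoc, Rinv_l, Rmult_1_r by lra.
  assert ((b0 * lam + 2 * (b1 * b0)) * (exp 1 - 1) <= (b0 * lam + 2 * (b1 * b0)) * 2)
    by (apply Rmult_le_compat_l; nra).
  assert (lam * lam = 32 * (s * s)) by (unfold lam; nra).
  assert (b0 * lam <= s * lam) by (apply Rmult_le_compat_r; lra).
  assert (s * lam <= 8 * (s * s)) by (unfold lam; nra).
  nra.
Qed.

Lemma speed_exp_tail_variation b0 b1 n eps : 0 < b0 -> b0 <= b1 -> (1 <= n)%nat -> 0 < eps ->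
  speed_exp_tail n b0 b1 (4 * sqrt 2 * sqrt (b1 * b0) + eps).
Proof.
  intros Hb0 Hb01 Hn He. set (lam := 4 * sqrt 2 * sqrt (b1 * b0)).
  assert (Hlam : 0 < lam).
  { unfold lam. pose proof (sqrt_lt_R0 2 ltac:(lra)). pose proof (sqrt_lt_R0 (b1 * b0) ltac:(nra)).
    nra. }
  set (mu := b1 / lam). assert (Hmu : 0 <= mu) by (apply Rdiv_nonneg; lra).
  assert (Hesum : forall x, 0 <= esum n x)
    by (intros; apply sumR_nonneg; intros; left; apply exp_pos).
  assert (Hevar : forall x, 0 <= evar n x) by (intros; apply sumR_nonneg; intros; apply Rabs_pos).
  apply (speed_exp_tail_drift b0 b1 n Hn Hb0 Hb01 (esum_evar n mu) 1 lam); try lra.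
  - intros x. unfold esum_evar. rewrite Rmult_1_l.
    assert (exp (INR (x n)) <= esum n x).
    { replace (exp (INR (x n))) with (ecoord n x n) by (unfold ecoord; rewrite cget_in by lia; auto).
      apply sumR_term; [apply in_sites; lia | intros; left; apply exp_pos]. }
    specialize (Hevar x). nra.
  - intros x. eapply Rle_trans; [apply Gen_esum_evar_le; lra|]. unfold esum_evar.
    pose proof (slow_rate_coefficient_le b0 b1 Hb0 Hb01). fold lam mu in H.
    specialize (Hesum x). specialize (Hevar x).
    replace (b1 * evar n x) with (lam * mu * evar n x) by (unfold mu; field; lra).
    assert (b0 * (1 + 2 * mu) * (exp 1 - 1) * esum n x <= lam * esum n x)
      by (apply Rmult_le_compat_r; assumption).
    lra.
Qed.

(** * Speed ((n-1) b1 + b0) / n: the tail blocks *)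

Lemma sumR_one_small l f lo hi j0 :
  In j0 l -> (forall i, In i l -> f i <= hi) -> f j0 <= lo ->
  sumR l f + hi <= INR (length l) * hi + lo.
Proof.
  induction l as [|a l IH]; intros Hj Hf Hj0; [destruct Hj|].
  rewrite sumR_cons. cbn [length]. rewrite S_INR.
  assert (f a <= hi) by (apply Hf; left; reflexivity).
  destruct (Nat.eq_dec a j0) as [->|Ha].
  - assert (sumR l f <= INR (length l) * hi)
      by (apply sumR_le_const; intros; apply Hf; right; assumption).
    lra.
  - destruct Hj as [|Hj]; [contradiction|].
    assert (sumR l f + hi <= INR (length l) * hi + lo)
      by (apply IH; auto; intros; apply Hf; right; assumption).
    lra.
Qed.

Section TailBlocks.

Variables (b0 b1 : R) (n : nat) (th : R).
Hypotheses (Hn : (1 <= n)%nat) (Hb0 : 0 <= b0) (Hb01 : b0 <= b1) (Hth : 0 <= th).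

Definition tail_sites (k : nat) : list nat := seq (n - k + 1) k.
Definition tail_mass (k : nat) (x : nat -> nat) : R := sumR (tail_sites k) (fun i => INR (x i)).
Definition tail_exp (k : nat) (x : nat -> nat) : R := exp (th / INR k * tail_mass k x).
Definition tail_rate (k : nat) (x : nat -> nat) : R := sumR (tail_sites k) (rate b0 b1 n x).

Lemma in_tail_sites k i : (k <= n)%nat -> In i (tail_sites k) <-> (n - k + 1 <= i <= n)%nat.
Proof. intros. unfold tail_sites. rewrite in_seq. lia. Qed.

Lemma tail_mass_upd k x j : (1 <= k <= n)%nat -> (1 <= j <= n)%nat ->
  tail_mass k (upd x j) = tail_mass k x + (if Nat.leb (n - k + 1) j then 1 else 0).
Proof.
  intros Hk Hj.
  assert (E : tail_mass k (upd x j) - tail_mass k x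
              = sumR (tail_sites k) (fun i => if Nat.eqb i j then 1 else 0)).
  { unfold tail_mass. rewrite <- sumR_minus. apply sumR_ext. intros i _.
    unfold upd. destruct (Nat.eqb i j); [rewrite S_INR|]; ring. }
  destruct (Nat.leb_spec (n - k + 1) j).
  - rewrite (sumR_indicator _ _ (fun _ => 1)) in E;
      [lra | apply seq_NoDup | apply in_tail_sites; lia].
  - rewrite (sumR_indicator_out _ _ (fun _ => 1)) in E; [lra|].
    rewrite in_tail_sites; lia.
Qed.

Lemma Gen_tail_exp k x : (1 <= k <= n)%nat ->
  Gen b0 b1 n (tail_exp k) x = (exp (th / INR k) - 1) * tail_exp k x * tail_rate k x.
Proof.
  intros Hk. unfold Gen, sites. replace n with ((n - k) + k)%nat at 1 by lia.
  rewrite seq_app, sumR_app.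
  rewrite (sumR_ext (seq 1 (n - k)) _ (fun _ => 0)).
  2: { intros j Hj. apply in_seq in Hj. unfold tail_exp. rewrite tail_mass_upd by lia.
       destruct (Nat.leb_spec (n - k + 1) j); [lia|]. rewrite Rplus_0_r. ring. }
  rewrite sumR_const, Rmult_0_r, Rplus_0_l. replace (1 + (n - k))%nat with (n - k + 1)%nat by lia.
  fold (tail_sites k). unfold tail_rate. rewrite <- sumR_scal. apply sumR_ext.
  intros j Hj. apply in_tail_sites in Hj; [|lia]. unfold tail_exp. rewrite tail_mass_upd by lia.
  destruct (Nat.leb_spec (n - k + 1) j); [|lia].
  rewrite Rmult_plus_distr_l, exp_plus, Rmult_1_r. ring.
Qed.

(* If every site of the block has a strictly higher neighbour, so does a site realizing the
   block maximum; that neighbour can only be site n - k, just left of the block. *)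
Lemma tail_all_active k x : (1 <= k <= n)%nat ->
  (forall j, In j (tail_sites k) -> Vj n x j <> 0%nat) ->
  (k < n)%nat /\ forall i, In i (tail_sites k) -> (x i < x (n - k))%nat.
Proof.
  intros Hk Hactive.
  destruct (max_on_attained x (tail_sites k)) as [i0 [Hi0 Ei0]].
  { unfold tail_sites. destruct k; [lia | discriminate]. }
  assert (Hall : forall i, In i (tail_sites k) -> (x i <= x i0)%nat)
    by (intros; rewrite Ei0; apply le_max_on; assumption).
  specialize (Hactive i0 Hi0). pose proof Hi0 as Hi0'. apply in_tail_sites in Hi0'; [|lia].
  unfold Vj in Hactive. rewrite (cget_in n x i0) in Hactive by lia.
  destruct (Nat.ltb_spec (x i0) (cget n x (i0 - 1))) as [Hl|_].
  - destruct (le_lt_dec (n - k + 1) (i0 - 1)).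
    + rewrite cget_in in Hl by lia. specialize (Hall (i0 - 1)%nat ltac:(apply in_tail_sites; lia)).
      lia.
    + destruct (Nat.eq_dec (n - k) 0); [rewrite cget_out in Hl by lia; lia|].
      rewrite cget_in in Hl by lia. replace (i0 - 1)%nat with (n - k)%nat in Hl by lia.
      split; [lia|]. intros i Hi. specialize (Hall i Hi). lia.
  - destruct (Nat.ltb_spec (x i0) (cget n x (i0 + 1))) as [Hr|]; [|simpl in Hactive; lia].
    destruct (le_lt_dec (i0 + 1) n).
    + rewrite cget_in in Hr by lia. specialize (Hall (i0 + 1)%nat ltac:(apply in_tail_sites; lia)).
      lia.
    + rewrite cget_out in Hr by lia. lia.
Qed.

Lemma tail_exp_le_succ k x : (1 <= k)%nat -> (k < n)%nat ->
  (forall i, In i (tail_sites k) -> (x i < x (n - k))%nat) -> tail_exp k x <= tail_exp (S k) x.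
Proof.
  intros Hk Hkn Hlt. unfold tail_exp. apply exp_le_mono.
  assert (Hs : tail_mass (S k) x = INR (x (n - k)%nat) + tail_mass k x).
  { unfold tail_mass, tail_sites. replace (n - S k + 1)%nat with (n - k)%nat by lia.
    cbn [seq]. rewrite sumR_cons. replace (S (n - k)) with (n - k + 1)%nat by lia. reflexivity. }
  assert (Hu : tail_mass k x <= INR k * INR (x (n - k)%nat)).
  { unfold tail_mass. replace (INR k) with (INR (length (tail_sites k)))
      by (unfold tail_sites; rewrite length_seq; reflexivity).
    apply sumR_le_const. intros i Hi. apply le_INR. specialize (Hlt i Hi). lia. }
  rewrite Hs, S_INR. assert (HkR : 1 <= INR k) by (apply (le_INR 1); lia).
  unfold Rdiv. rewrite !Rmult_assoc. apply Rmult_le_compat_l; [lra|].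
  apply Rmult_le_reg_l with (INR k * (INR k + 1)); [nra|].
  replace (INR k * (INR k + 1) * (/ INR k * tail_mass k x)) with ((INR k + 1) * tail_mass k x)
    by (field; lra).
  replace (INR k * (INR k + 1) * (/ (INR k + 1) * (INR (x (n - k)%nat) + tail_mass k x)))
    with (INR k * (INR (x (n - k)%nat) + tail_mass k x)) by (field; lra).
  nra.
Qed.

Variables (G D : R).
Hypotheses
  (HG : forall k, (1 <= k <= n)%nat -> (exp (th / INR k) - 1) * ((INR k - 1) * b1 + b0) <= G)
  (HD : forall k, (1 <= k <= n)%nat -> (exp (th / INR k) - 1) * (INR k * b1) <= D).

(* Either the block contains a slow site, and its total rate is at most (k-1) b1 + b0, or the
   block sits strictly below site n - k and its exponential moment is dominated by the next one. *)
Lemma Gen_tail_exp_le k x : (1 <= k <= n)%nat ->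
  Gen b0 b1 n (tail_exp k) x
  <= G * tail_exp k x + D * (if Nat.ltb k n then tail_exp (S k) x else 0).
Proof.
  intros Hk. rewrite Gen_tail_exp by exact Hk.
  assert (HkR : 1 <= INR k) by (apply (le_INR 1); lia).
  assert (He : 0 <= exp (th / INR k) - 1)
    by (pose proof (one_le_exp (th / INR k) ltac:(apply Rdiv_nonneg; lra)); lra).
  assert (Hp : 0 < tail_exp k x) by apply exp_pos.
  assert (HD0 : 0 <= D).
  { specialize (HD k Hk). assert (0 <= (exp (th / INR k) - 1) * (INR k * b1)) by
      (apply Rmult_le_pos; nra). lra. }
  assert (Hnext : 0 <= (if Nat.ltb k n then tail_exp (S k) x else 0))
    by (destruct (Nat.ltb k n); [left; apply exp_pos | lra]).
  assert (Hlen : INR (length (tail_sites k)) = INR k)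
    by (unfold tail_sites; rewrite length_seq; reflexivity).
  assert (HRk : tail_rate k x <= INR k * b1).
  { unfold tail_rate. rewrite <- Hlen. apply sumR_le_const. intros; apply rate_bounds; lra. }
  destruct (classic (exists j, In j (tail_sites k) /\ Vj n x j = 0%nat)) as [[j0 [Hj0 HV]]|Hno].
  - assert (HR : tail_rate k x <= (INR k - 1) * b1 + b0).
    { pose proof (sumR_one_small (tail_sites k) (rate b0 b1 n x) b0 b1 j0 Hj0
        ltac:(intros; apply rate_bounds; lra) ltac:(rewrite rate_Vj0 by exact HV; lra)) as Hs.
      rewrite Hlen in Hs. unfold tail_rate. lra. }
    specialize (HG k Hk).
    assert ((exp (th / INR k) - 1) * tail_rate k x <= G)
      by (eapply Rle_trans; [apply Rmult_le_compat_l|]; eassumption).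
    assert (0 <= D * (if Nat.ltb k n then tail_exp (S k) x else 0)) by (apply Rmult_le_pos; lra).
    assert ((exp (th / INR k) - 1) * tail_rate k x * tail_exp k x <= G * tail_exp k x)
      by (apply Rmult_le_compat_r; lra).
    lra.
  - destruct (tail_all_active k x Hk) as [Hkn Hlt].
    { intros j Hj HV. apply Hno. exists j. split; assumption. }
    pose proof (tail_exp_le_succ k x ltac:(lia) Hkn Hlt).
    destruct (Nat.ltb_spec k n); [|lia]. specialize (HD k Hk).
    assert ((exp (th / INR k) - 1) * tail_rate k x <= D)
      by (eapply Rle_trans; [apply Rmult_le_compat_l|]; eassumption).
    assert (0 <= G * tail_exp k x).
    { apply Rmult_le_pos; [|lra]. specialize (HG k Hk).
      assert (0 <= (exp (th / INR k) - 1) * ((INR k - 1) * b1 + b0)) by (apply Rmult_le_pos; nra).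
      lra. }
    assert ((exp (th / INR k) - 1) * tail_rate k x * tail_exp k x <= D * tail_exp (S k) x)
      by (apply Rmult_le_compat; try lra; apply Rmult_le_pos;
          [lra | apply sumR_nonneg; intros; apply rate_bounds; lra]).
    lra.
Qed.

End TailBlocks.

Lemma sumR_shifted_le m (a : nat -> R) r : 0 <= r -> (forall k, 0 <= a k) ->
  sumR (seq 1 m) (fun k => if Nat.ltb k m then r ^ k * a (S k) else 0)
  <= sumR (seq 1 m) (fun k => r ^ (k - 1) * a k).
Proof.
  intros Hr Ha. destruct m as [|m]; [apply Rle_refl|].
  set (Phi := sumR (seq 1 (S m)) (fun k => r ^ (k - 1) * a k)).
  rewrite seq_S, sumR_app, sumR_cons. replace (1 + m)%nat with (S m) by lia.
  rewrite Nat.ltb_irrefl.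
  rewrite (sumR_ext (seq 1 m) _ (fun k => r ^ (S k - 1) * a (S k))).
  2: { intros k Hk. apply in_seq in Hk. destruct (Nat.ltb_spec k (S m)); [|lia].
       replace (S k - 1)%nat with k by lia. reflexivity. }
  rewrite <- (sumR_map (seq 1 m) S (fun k => r ^ (k - 1) * a k)), seq_shift.
  unfold Phi. cbn [seq]. rewrite sumR_cons.
  pose proof (Rmult_le_pos _ _ (pow_le r (1 - 1) Hr) (Ha 1%nat)). cbn [sumR fold_right map]. lra.
Qed.

Lemma sumR_chain_le m (a : nat -> R) r G D delta :
  0 <= r -> 0 <= delta -> D <= r * delta -> (forall k, 0 <= a k) ->
  sumR (seq 1 m) (fun k => r ^ (k - 1) * (G * a k + D * (if Nat.ltb k m then a (S k) else 0)))
  <= (G + delta) * sumR (seq 1 m) (fun k => r ^ (k - 1) * a k).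
Proof.
  intros Hr Hdelta HD Ha.
  rewrite (sumR_ext _ _ (fun k => G * (r ^ (k - 1) * a k)
             + r ^ (k - 1) * D * (if Nat.ltb k m then a (S k) else 0))) by (intros; ring).
  rewrite sumR_plus, sumR_scal, Rmult_plus_distr_r. apply Rplus_le_compat_l.
  eapply Rle_trans;
    [apply sumR_le with (g := fun k => delta * (if Nat.ltb k m then r ^ k * a (S k) else 0))|].
  - intros k Hk. apply in_seq in Hk. destruct (Nat.ltb k m); [|lra].
    replace (r ^ k) with (r * r ^ (k - 1)) by (replace k with (S (k - 1)) at 2 by lia; reflexivity).
    pose proof (pow_le r (k - 1) Hr). pose proof (Ha (S k)).
    assert (r ^ (k - 1) * D * a (S k) <= r ^ (k - 1) * (r * delta) * a (S k))
      by (apply Rmult_le_compat_r; [|apply Rmult_le_compat_l]; lra).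
    lra.
  - rewrite sumR_scal. apply Rmult_le_compat_l; [exact Hdelta|]. apply sumR_shifted_le; assumption.
Qed.

Lemma exp_div_sub1_le th k : 0 <= th < 1 -> 1 <= k -> exp (th / k) - 1 <= th / (k - th).
Proof.
  intros Hth Hk. replace (th / (k - th)) with (th / k / (1 - th / k)) by (field; lra).
  apply exp_sub1_le. split; [apply Rdiv_nonneg; lra|].
  apply Rmult_lt_reg_r with k; [lra|]. unfold Rdiv. rewrite Rmult_assoc, Rinv_l; lra.
Qed.

Lemma block_rate_le_mean b0 b1 n k : b0 <= b1 -> (1 <= k <= n)%nat ->
  (INR k - 1) * b1 + b0 <= INR k * (((INR n - 1) * b1 + b0) / INR n).
Proof.
  intros Hb01 Hk.
  assert (Hkn : 1 <= INR k <= INR n) by (split; [apply (le_INR 1) | apply le_INR]; lia).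
  apply Rmult_le_reg_r with (INR n); [lra|].
  unfold Rdiv. rewrite (Rmult_assoc (INR k)), Rmult_assoc, Rinv_l by lra. nra.
Qed.

Lemma speed_exp_tail_blocks b0 b1 n eps : 0 < b0 -> b0 <= b1 -> (1 <= n)%nat -> 0 < eps ->
  speed_exp_tail n b0 b1 (((INR n - 1) * b1 + b0) / INR n + eps).
Proof.
  intros Hb0 Hb01 Hn He. assert (HnR : 1 <= INR n) by (apply (le_INR 1); lia).
  set (v := ((INR n - 1) * b1 + b0) / INR n).
  assert (Hv : 0 < v) by (unfold v; apply Rdiv_lt_0_compat; nra).
  set (th := eps / (4 * v + eps)).
  assert (Hth : 0 < th < 1).
  { unfold th. split; [apply Rdiv_lt_0_compat; lra|].
    apply Rmult_lt_reg_r with (4 * v + eps); [lra|]. unfold Rdiv. rewrite Rmult_assoc, Rinv_l; lra. }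
  assert (Hthv : th * (v + eps / 4) = eps / 4) by (unfold th; field; lra).
  set (G := th * (v + eps / 4)). set (delta := th * eps / 4). set (D := b1 * (th / (1 - th))).
  (* The weight ratio r lets the block of size k + 1 absorb the spill-over D of block k. *)
  set (r := D / delta).
  assert (Hdelta : 0 < delta) by (unfold delta; nra).
  assert (HD0 : 0 <= D) by (unfold D; apply Rmult_le_pos; [lra | apply Rdiv_nonneg; lra]).
  assert (Hr : 0 <= r) by (apply Rdiv_nonneg; lra).
  assert (HG : forall k, (1 <= k <= n)%nat -> (exp (th / INR k) - 1) * ((INR k - 1) * b1 + b0) <= G).
  { intros k Hk. assert (HkR : 1 <= INR k) by (apply (le_INR 1); lia).
    pose proof (exp_div_sub1_le th (INR k) ltac:(lra) HkR).
    pose proof (block_rate_le_mean b0 b1 n k Hb01 Hk). fold v in H0.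
    assert (0 <= (INR k - 1) * b1 + b0) by nra.
    apply Rle_trans with (th / (INR k - th) * (INR k * v)).
    { apply Rle_trans with (th / (INR k - th) * ((INR k - 1) * b1 + b0));
        [apply Rmult_le_compat_r; lra | apply Rmult_le_compat_l; [apply Rdiv_nonneg|]; lra]. }
    apply Rmult_le_reg_r with (INR k - th); [lra|].
    replace (th / (INR k - th) * (INR k * v) * (INR k - th)) with (th * (INR k * v)) by (field; lra).
    unfold G.
    replace (th * (v + eps / 4) * (INR k - th)) with (INR k * (eps / 4) - th * (eps / 4))
      by (transitivity (INR k * (th * (v + eps / 4)) - th * (th * (v + eps / 4)));
          [rewrite Hthv; ring | ring]).
    replace (th * (INR k * v)) with (INR k * (eps / 4) - INR k * (th * (eps / 4)))
      by (transitivity (INR k * (th * (v + eps / 4)) - INR k * (th * (eps / 4)));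
          [rewrite Hthv; ring | ring]).
    assert (0 <= th * (eps / 4) * (INR k - 1)) by (apply Rmult_le_pos; [apply Rmult_le_pos|]; lra).
    lra. }
  assert (HD : forall k, (1 <= k <= n)%nat -> (exp (th / INR k) - 1) * (INR k * b1) <= D).
  { intros k Hk. assert (HkR : 1 <= INR k) by (apply (le_INR 1); lia).
    pose proof (exp_div_sub1_le th (INR k) ltac:(lra) HkR).
    apply Rle_trans with (th / (INR k - th) * (INR k * b1)); [apply Rmult_le_compat_r; nra|].
    unfold D. replace (th / (INR k - th) * (INR k * b1)) with (b1 * (th * INR k / (INR k - th)))
      by (field; lra).
    apply Rmult_le_compat_l; [lra|]. apply Rmult_le_reg_r with ((INR k - th) * (1 - th)); [nra|].
    replace (th * INR k / (INR k - th) * ((INR k - th) * (1 - th))) with (th * INR k * (1 - th))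
      by (field; lra).
    replace (th / (1 - th) * ((INR k - th) * (1 - th))) with (th * (INR k - th)) by (field; lra).
    nra. }
  set (Phi := fun x => sumR (seq 1 n) (fun k => r ^ (k - 1) * tail_exp n th k x)).
  apply (speed_exp_tail_drift b0 b1 n Hn Hb0 Hb01 Phi th (G + delta));
    [lra | unfold G, delta; nra | unfold G, delta; nra | |].
  - intros x. unfold Phi. eapply Rle_trans; [|apply (sumR_term _ _ 1%nat); [apply in_seq; lia|]].
    + cbv beta. rewrite pow_O, Rmult_1_l. unfold tail_exp, tail_mass, tail_sites.
      replace (n - 1 + 1)%nat with n by lia. cbn [seq]. rewrite sumR_cons. cbn [sumR fold_right map].
      right. f_equal. simpl INR. field.
    + intros. apply Rmult_le_pos; [apply pow_le; lra | left; apply exp_pos].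
  - intros x. unfold Phi. rewrite Gen_sum. eapply Rle_trans.
    + apply sumR_le. intros k Hk. apply in_seq in Hk.
      apply Rmult_le_compat_l; [apply pow_le; lra|].
      apply (Gen_tail_exp_le b0 b1 n th Hn ltac:(lra) Hb01 ltac:(lra) G D HG HD k x). lia.
    + apply sumR_chain_le; [lra | lra | unfold r; right; field; lra | intros; left; apply exp_pos].
Qed.

Lemma ProbGe_le_weaken m b0 b1 t a B B' :
  B <= B' -> ProbGe_le m b0 b1 t a B -> ProbGe_le m b0 b1 t a B'.
Proof. intros H [p [Hp Hle]]. exists p. split; [exact Hp | lra]. Qed.

Lemma speed_exp_tail_common n b0 b1 d1 d2 d3 :
  speed_exp_tail n b0 b1 d1 -> speed_exp_tail n b0 b1 d2 -> speed_exp_tail n b0 b1 d3 ->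
  exists C alpha : R, 0 < C /\ 0 < alpha /\
    forall t, 0 <= t ->
      ProbGe_le n b0 b1 t (d1 * t) (C * exp (- (alpha * t))) /\
      ProbGe_le n b0 b1 t (d2 * t) (C * exp (- (alpha * t))) /\
      ProbGe_le n b0 b1 t (d3 * t) (C * exp (- (alpha * t))).
Proof.
  intros [C1 [a1 [HC1 [Ha1 H1]]]] [C2 [a2 [HC2 [Ha2 H2]]]] [C3 [a3 [HC3 [Ha3 H3]]]].
  set (al := Rmin a1 (Rmin a2 a3)).
  assert (Hal : 0 < al) by (unfold al; repeat apply Rmin_glb_lt; assumption).
  assert (Hal1 : al <= a1) by apply Rmin_l.
  assert (Hal2 : al <= a2) by (eapply Rle_trans; [apply Rmin_r | apply Rmin_l]).
  assert (Hal3 : al <= a3) by (eapply Rle_trans; [apply Rmin_r | apply Rmin_r]).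
  set (C := C1 + C2 + C3).
  assert (Hweaken : forall Ci a t, 0 <= t -> 0 < Ci <= C -> al <= a ->
            Ci * exp (- (a * t)) <= C * exp (- (al * t))).
  { intros Ci a t Ht HCi Ha. apply Rmult_le_compat; [lra | left; apply exp_pos | lra |].
    apply exp_le_mono. nra. }
  exists C, al. split; [unfold C; lra|]. split; [exact Hal|]. intros t Ht.
  repeat split; eapply ProbGe_le_weaken;
    [| apply H1 | | apply H2 | | apply H3]; try exact Ht; apply Hweaken; unfold C; lra.
Qed.

Theorem mainTheorem9 (b0 b1 : R) (n : nat) (eps : R) :
  0 < b0 -> b0 < b1 -> (2 <= n)%nat -> 0 < eps ->
  exists C alpha : R, 0 < C /\ 0 < alpha /\
    forall t : R, 0 <= t ->
      ProbGe_le n b0 b1 t ((INR n * b0 + eps) * t) (C * exp (- (alpha * t))) /\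
      ProbGe_le n b0 b1 t ((((INR n - 1) * b1 + b0) / INR n + eps) * t)
        (C * exp (- (alpha * t))) /\
      ProbGe_le n b0 b1 t ((4 * sqrt 2 * sqrt (b1 * b0) + eps) * t)
        (C * exp (- (alpha * t))).
Proof.
  intros Hb0 Hb01 Hn He.
  apply speed_exp_tail_common;
    [apply speed_exp_tail_max | apply speed_exp_tail_blocks | apply speed_exp_tail_variation];
    solve [lra | lia].
Qed.
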